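(* Let $\alpha_1,\dots,\alpha_n$ be PL arcs in the plane with a common endpoint $z$ such that $\alpha_i\cap\alpha_j$ is connected for all $i,j$. Then $\bigcup_{i=1}^n\alpha_i$ is a tree.
   Context: A set $X\subset\mathbb{R}^2$ is a tree if it is connected, simply connected, and homeomorphic to a union of finitely many straight line segments. *)

From HB Require Import structures.
From mathcomp Require Import all_boot all_order all_algebra.
From mathcomp Require Import all_classical all_reals all_analysis.
Set Implicit Arguments. Unset Strict Implicit. Unset Printing Implicit Defensive.
Import Order.TTheory GRing.Theory Num.Theory.
Import numFieldNormedType.Exports.
Local Open Scope classical_set_scope.
Local Open Scope ring_scope.

Section defs.
Variable R : realType.
Local Notation pt := (R * R)%type.

Definition I01 : set R := [set t | 0 <= t <= 1].

Definition lerp (a b : pt) (t : R) : pt :=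
  ((1 - t) * a.1 + t * b.1, (1 - t) * a.2 + t * b.2).

Definition segment (a b : pt) : set pt := lerp a b @` I01.

Definition PL_on01 (gamma : R -> pt) : Prop :=
  exists (k : nat) (t : nat -> R) (v : nat -> pt),
    [/\ (0 < k)%N, t 0%N = 0, t k = 1,
        (forall i, (i < k)%N -> t i < t i.+1) &
        (forall i, (i < k)%N -> forall s, t i <= s <= t i.+1 ->
            gamma s = lerp (v i) (v i.+1) ((s - t i) / (t i.+1 - t i)))].

(* A is a PL arc with endpoints x and y: the image of [0,1] under an injective
   piecewise-linear (hence continuous, hence homeomorphism onto its image) map
   gamma with gamma 0 = x and gamma 1 = y. *)
Definition PL_arc (A : set pt) (x y : pt) : Prop :=
  exists gamma : R -> pt,
    [/\ PL_on01 gamma, {in I01 &, injective gamma},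
        A = gamma @` I01, gamma 0 = x & gamma 1 = y].

Definition homeomorphic (X Y : set pt) : Prop :=
  exists (f g : pt -> pt),
    [/\ {within X, continuous f}, {within Y, continuous g},
        f @` X `<=` Y /\ g @` Y `<=` X,
        (forall x, X x -> g (f x) = x) & (forall y, Y y -> f (g y) = y)].

Definition path_connected (X : set pt) : Prop :=
  forall x y, X x -> X y ->
    exists p : R -> pt, [/\ {within I01, continuous p}, p @` I01 `<=` X,
                            p 0 = x & p 1 = y].

Definition loops_nullhomotopic (X : set pt) : Prop :=
  forall p : R -> pt, {within I01, continuous p} -> p @` I01 `<=` X ->
    p 0 = p 1 ->
    exists H : R * R -> pt,
      [/\ {within I01 `*` I01, continuous H}, H @` (I01 `*` I01) `<=` X,
          (forall s, I01 s -> H (s, 0) = p s),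
          (forall s, I01 s -> H (s, 1) = p 0) &
          (forall u, I01 u -> H (0, u) = p 0 /\ H (1, u) = p 0)].

Definition simply_connected (X : set pt) : Prop :=
  path_connected X /\ loops_nullhomotopic X.

Definition finite_segment_union_homeomorphic (X : set pt) : Prop :=
  exists (m : nat) (a b : 'I_m -> pt),
    homeomorphic X (\bigcup_(i in [set: 'I_m]) segment (a i) (b i)).

Definition tree (X : set pt) : Prop :=
  [/\ connected X, simply_connected X & finite_segment_union_homeomorphic X].
End defs.

From HB Require Import structures.
From mathcomp Require Import all_boot all_order all_algebra.
From mathcomp Require Import all_classical all_reals all_analysis.
From mathcomp.algebra_tactics Require Import ring lra.
Import Order.TTheory GRing.Theory Num.Theory.
Import numFieldNormedType.Exports.
Local Open Scope classical_set_scope.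
Local Open Scope ring_scope.
Set Implicit Arguments. Unset Strict Implicit. Unset Printing Implicit Defensive.

(* Let Y_k be {z} together with the first k arcs.  Since alpha_k meets each
   earlier arc in a connected set containing z = alpha_k(0), the parameters t
   with alpha_k(t) in Y_k form a closed initial interval [0, a].  Pushing the
   rest of alpha_k back onto alpha_k([0, a]) deforms Y_(k+1) into Y_k, so by
   induction the whole union contracts to z; a space contracting to a point is
   path connected and all its loops are null-homotopic.  Finally, a union of
   PL arcs is literally a finite union of segments. *)

Section continuity.
Context {T U V : topologicalType}.

Lemma subspace_continuous_comp (A : set T) (B : set U) (f : T -> U) (g : U -> V) :
  {within A, continuous f} -> f @` A `<=` B ->
  {within B, continuous g} -> {within A, continuous (g \o f)}.
Proof.
move=> cf fAB cg; apply/subspace_continuousP => x Ax.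
have /subspace_continuousP cf' := cf; have /subspace_continuousP cg' := cg.
have fx_within : f @ within A (nbhs x) --> within B (nbhs (f x)).
  move=> P /= /(cf' x Ax); rewrite nbhs_simpl /= => fP.
  have Anear : within A (nbhs x) A by exact: withinT.
  apply: filterS (filterI fP Anear) => y [Py Ay].
  by apply: Py; apply: fAB; exists y.
exact: cvg_trans (cvg_app g fx_within) (cg' _ (fAB _ (imageP _ Ax))).
Qed.

Lemma closed_preimage_within (A : set T) (B : set U) (f : T -> U) :
  closed A -> {within A, continuous f} -> closed B -> closed (A `&` f @^-1` B).
Proof.
by move=> cA cf cB; rewrite setIC closed_setIS //; exact: (continuous_closedP _).1 cf _ cB.
Qed.

Lemma closed_setX (A : set T) (B : set U) : closed A -> closed B -> closed (A `*` B).
Proof.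
move=> cA cB; apply: closedI.
  by apply: preimage_closed cA => -[a b] _; exact: cvg_fst.
by apply: preimage_closed cB => -[a b] _; exact: cvg_snd.
Qed.

Lemma continuous_pair (f : T -> U) (g : T -> V) :
  continuous f -> continuous g -> continuous (fun x => (f x, g x)).
Proof. by move=> cf cg x; apply: cvg_pair; [exact: cf|exact: cg]. Qed.

Lemma continuous_fst : continuous (@fst T U).
Proof. by move=> [x y]; exact: cvg_fst. Qed.

Lemma continuous_snd : continuous (@snd T U).
Proof. by move=> [x y]; exact: cvg_snd. Qed.

Lemma continuous_comp_fun (f : T -> U) (h : U -> V) :
  continuous f -> continuous h -> continuous (fun x => h (f x)).
Proof. by move=> cf ch x; apply: continuous_comp; [exact: cf|exact: ch]. Qed.

End continuity.

(* On a compact [K], [G] is a closed map onto [G @` K], hence a quotient map. *)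
Lemma factor_continuous_compact {T1 T2 T3 : topologicalType}
    (K : set T1) (G : T1 -> T2) (g : T1 -> T3) (f : T2 -> T3) :
  hausdorff_space T2 -> compact K -> {within K, continuous G} ->
  {within K, continuous g} -> (forall s, K s -> f (G s) = g s) ->
  {within G @` K, continuous f}.
Proof.
move=> hT cK cG cg fG; apply/continuous_closedP => W cW.
have /closed_subspaceP [V cV VK] := (continuous_closedP _).1 cg W cW.
apply/closed_subspaceP; exists (G @` (K `&` V)).
  apply: compact_closed => //; apply: continuous_compact.
    exact: continuous_subspaceW cG.
  exact: compact_closedI.
apply/seteqP; split => y.
  move=> [[s [Ks Vs] <-] _]; split; last by exists s.
  have : (V `&` K) s by [].
  by rewrite VK => -[Ws _]; rewrite /preimage /= /from_subspace fG.
move=> [fy [s Ks Gs]]; split; last by exists s.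
have : ((from_subspace K g) @^-1` W `&` K) s.
  by split => //; rewrite /preimage /from_subspace /= -fG // Gs.
by rewrite -VK => -[Vs _]; exists s.
Qed.

Section real_continuity.
Context {R : realType} {T : topologicalType}.
Implicit Types f h : T -> R.

Lemma continuous_add_fun f h :
  continuous f -> continuous h -> continuous (fun x => f x + h x).
Proof. by move=> cf ch x; exact: (@continuousD R R^o _ f h x (cf x) (ch x)). Qed.

Lemma continuous_sub_fun f h :
  continuous f -> continuous h -> continuous (fun x => f x - h x).
Proof. by move=> cf ch x; exact: (@continuousB R R^o _ f h x (cf x) (ch x)). Qed.

Lemma continuous_mul_fun f h :
  continuous f -> continuous h -> continuous (fun x => f x * h x).
Proof. by move=> cf ch x; exact: (@continuousM R _ f h x (cf x) (ch x)). Qed.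

Lemma continuous_min_fun f h :
  continuous f -> continuous h -> continuous (fun x => Num.min (f x) (h x)).
Proof. by move=> cf ch x; exact: (@continuous_min R _ f h x (cf x) (ch x)). Qed.

Lemma continuous_max_fun f h :
  continuous f -> continuous h -> continuous (fun x => Num.max (f x) (h x)).
Proof. by move=> cf ch x; exact: (@continuous_max R _ f h x (cf x) (ch x)). Qed.

End real_continuity.

Ltac solve_continuous :=
  repeat first
    [ exact: cst_continuous
    | exact: (fun x => @cvg_id _ (nbhs x))
    | exact: continuous_fst
    | exact: continuous_snd
    | apply: continuous_sub_fun
    | apply: continuous_add_fun
    | apply: continuous_mul_fun
    | apply: continuous_min_fun
    | apply: continuous_max_fun ].

Section intervals.
Variable R : realType.
Local Notation I := (@I01 R).

Definition Icc (a b : R) : set R := [set s | a <= s <= b].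

Lemma Icc_itv a b : Icc a b = `[a, b]%classic.
Proof. by rewrite set_itvcc. Qed.

Lemma closed_Icc a b : closed (Icc a b).
Proof. by rewrite Icc_itv; exact: itv_closed. Qed.

Lemma compact_Icc a b : compact (Icc a b).
Proof. by rewrite Icc_itv; exact: segment_compact. Qed.

Lemma connected_Icc a b : connected (Icc a b).
Proof. by rewrite Icc_itv; exact: segment_connected. Qed.

Lemma I01_Icc : I = Icc 0 1. Proof. by []. Qed.

Lemma closed_I01 : closed I.
Proof. exact: closed_Icc. Qed.

Lemma compact_I01 : compact I.
Proof. exact: compact_Icc. Qed.

Lemma I01_0 : I 0. Proof. by rewrite /I01 /= lexx ler01. Qed.

Lemma I01_1 : I 1. Proof. by rewrite /I01 /= lexx ler01. Qed.

Lemma Icc_sub_I01 a b : 0 <= a -> b <= 1 -> Icc a b `<=` I.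
Proof. by move=> a0 b1 s /andP[? ?]; apply/andP; split; lra. Qed.

Lemma Icc_split (a b c : R) : a <= b -> b <= c -> Icc a c = Icc a b `|` Icc b c.
Proof.
move=> ab bc; apply/seteqP; split => x /=.
  by move=> /andP[ax xc]; have [xb|xb] := leP x b; [left|right]; apply/andP; split; lra.
by move=> [] /andP[? ?]; apply/andP; split; lra.
Qed.

Lemma closed_downset_Icc (S : set R) :
  closed S -> S 0 -> S `<=` I -> (forall s r, S s -> 0 <= r <= s -> S r) ->
  exists2 a, I a & S = Icc 0 a.
Proof.
move=> cS S0 SI Sdown.
have S_sup : has_sup S by split; [exists 0|exists 1 => s /SI /andP[]].
have Ssup : S (sup S).
  have : closure S (sup S) by apply: closure_sup; case: S_sup.
  by rewrite -(closure_id S).1.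
exists (sup S); first exact: SI.
apply/seteqP; split => s.
  by move=> Ss; apply/andP; split; [case/andP: (SI _ Ss)|exact: (sup_upper_bound S_sup)].
by move=> /andP[s0 sa]; apply: Sdown Ssup _; apply/andP.
Qed.

Lemma I01_halves : I = Icc 0 (1/2) `|` Icc (1/2) 1.
Proof.
apply/seteqP; split => u /=.
  by move=> /andP[u0 u1]; have [uh|uh] := leP u (1/2); [left|right]; apply/andP; split; lra.
by move=> [] /andP[u0 u1]; apply/andP; split; lra.
Qed.

Lemma concat_homotopy_continuous {T U : topologicalType} (A : set T) (f g : T -> R -> U) :
  closed A ->
  {within A `*` I, continuous (fun p => f p.1 p.2)} ->
  {within A `*` I, continuous (fun p => g p.1 p.2)} ->
  (forall x, A x -> f x 1 = g x 0) ->
  {within A `*` I, continuous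
     (fun p => if p.2 <= 1/2 then f p.1 (2 * p.2) else g p.1 (2 * p.2 - 1))}.
Proof.
move=> cA cf cg fg.
have -> : A `*` I = A `*` Icc 0 (1/2) `|` A `*` Icc (1/2) 1.
  rewrite I01_halves; apply/seteqP; split => -[x u] /=.
    by move=> [Ax [] uI]; [left|right].
  by move=> [] [Ax uI]; split => //; [left|right].
apply: withinU_continuous; [by apply: closed_setX => //; exact: closed_Icc..| |].
- apply: (@subspace_eq_continuous _ _ _ ((fun p => f p.1 p.2) \o (fun p => (p.1, 2 * p.2)))).
    by move=> [x u]; rewrite inE => -[_ /= /andP[_ uh]]; rewrite /from_subspace /= uh.
  apply: subspace_continuous_comp cf; last first.
    by move=> _ [[x u] [/= Ax /andP[u0 u1]] <-]; split => //=; apply/andP; split; lra.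
  by apply: continuous_subspaceT; apply: continuous_pair; solve_continuous.
- apply: (@subspace_eq_continuous _ _ _ ((fun p => g p.1 p.2) \o (fun p => (p.1, 2 * p.2 - 1)))).
    move=> [x u]; rewrite inE => -[/= Ax /andP[u0 u1]]; rewrite /from_subspace /=.
    case: ifPn => // uh; have -> : u = 1/2 by apply/eqP; rewrite eq_le uh u0.
    by rewrite (_ : 2 * (1/2) = 1 :> R) ?subrr ?fg //; lra.
  apply: subspace_continuous_comp cg; last first.
    by move=> _ [[x u] [/= Ax /andP[u0 u1]] <-]; split => //=; apply/andP; split; lra.
  by apply: continuous_subspaceT; apply: continuous_pair; solve_continuous.
Qed.

End intervals.

Arguments I01_0 {R}.
Arguments I01_1 {R}.

Section piecewise_linear.
Variable R : realType.
Local Notation pt := (R * R)%type.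
Local Notation I := (@I01 R).

Lemma lerp_continuous (a b : pt) : continuous (lerp a b).
Proof. by apply: continuous_pair; solve_continuous. Qed.

Definition segment_union (s : seq (pt * pt)) : set pt :=
  \bigcup_(e in [set e | e \in s]) segment e.1 e.2.

Lemma segment_union_cat s1 s2 :
  segment_union (s1 ++ s2) = segment_union s1 `|` segment_union s2.
Proof.
apply/seteqP; split => x.
  by move=> [e /=]; rewrite mem_cat => /orP[] es ex; [left|right]; exists e.
by move=> [] [e /= es ex]; exists e => //=; rewrite mem_cat es ?orbT.
Qed.

Lemma segment_union_seq1 (a b : pt) : segment_union [:: (a, b)] = segment a b.
Proof.
apply/seteqP; split => x; first by move=> [e /=]; rewrite inE => /eqP ->.
by move=> abx; exists (a, b) => //=; rewrite inE.
Qed.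

Lemma bigcup_segment_union (T : finType) (ss : T -> seq (pt * pt)) :
  \bigcup_(i in [set: T]) segment_union (ss i) =
  segment_union (flatten [seq ss i | i <- enum T]).
Proof.
apply/seteqP; split => x.
  move=> [i _ [e /= ei ex]]; exists e => //=.
  by apply/flatten_mapP; exists i; rewrite ?mem_enum.
by move=> [e /= /flatten_mapP[i _ ei] ex]; exists i => //; exists e.
Qed.

Lemma homeomorphic_refl (X : set pt) : homeomorphic X X.
Proof.
have cid : {within X, continuous id} by apply: continuous_subspaceT => x; exact: cvg_id.
by exists id, id; split => //; split => _ [x Xx <-].
Qed.

Lemma segment_union_finite s : finite_segment_union_homeomorphic (segment_union s).
Proof.
exists (size s), (fun i => (nth (0, 0) s i).1), (fun i => (nth (0, 0) s i).2).
suff -> : segment_union s =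
    \bigcup_(i in [set: 'I_(size s)]) segment (nth (0, 0) s i).1 (nth (0, 0) s i).2.
  exact: homeomorphic_refl.
apply/seteqP; split => x.
  move=> [e /= /(nthP (0, 0)) [i ilt <-] ex]; by exists (Ordinal ilt).
by move=> [i _ ex]; exists (nth (0, 0) s i) => //=; apply: mem_nth.
Qed.

Section PL_map.
Variables (g : R -> pt) (k : nat) (t : nat -> R) (v : nat -> pt).
Hypotheses (t_incr : forall i, (i < k)%N -> t i < t i.+1)
  (g_lerp : forall i, (i < k)%N -> forall s, t i <= s <= t i.+1 ->
     g s = lerp (v i) (v i.+1) ((s - t i) / (t i.+1 - t i))).

Lemma PL_partition_le i : (i <= k)%N -> t 0%N <= t i.
Proof. by elim: i => [//|i IH] ik; apply: le_trans (IH (ltnW ik)) (ltW (t_incr ik)). Qed.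

Lemma PL_partition_split i : (i < k)%N ->
  Icc (t 0%N) (t i.+1) = Icc (t 0%N) (t i) `|` Icc (t i) (t i.+1).
Proof.
by move=> ik; apply: Icc_split; [exact: PL_partition_le (ltnW ik)|exact: ltW (t_incr ik)].
Qed.

Lemma PL_piece_continuous i : (i < k)%N -> {within Icc (t i) (t i.+1), continuous g}.
Proof.
move=> ik; apply: (@subspace_eq_continuous _ _ _
  (lerp (v i) (v i.+1) \o (fun s => (s - t i) / (t i.+1 - t i)))).
  by move=> s; rewrite inE => sI; rewrite /from_subspace (g_lerp ik).
apply: continuous_subspaceT => s; apply: continuous_comp; last exact: lerp_continuous.
by move: s; solve_continuous.
Qed.

Lemma PL_piece_image i : (i < k)%N -> g @` Icc (t i) (t i.+1) = segment (v i) (v i.+1).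
Proof.
move=> ik; have d0 : 0 < t i.+1 - t i by rewrite subr_gt0 t_incr.
apply/seteqP; split => x.
  move=> [s /andP[s0 s1] <-]; rewrite (g_lerp ik) ?s0 ?s1 //.
  exists ((s - t i) / (t i.+1 - t i)) => //; apply/andP; split.
    by apply: divr_ge0; lra.
  by rewrite ler_pdivrMr // mul1r; lra.
move=> [r /andP[r0 r1] <-]; exists (t i + r * (t i.+1 - t i)).
  by apply/andP; split; nra.
rewrite (g_lerp ik); last by apply/andP; split; nra.
by congr lerp; rewrite [t i + _]addrC addrK mulfK // lt0r_neq0.
Qed.

End PL_map.

Lemma PL_on01_continuous (g : R -> pt) : PL_on01 g -> {within I, continuous g}.
Proof.
move=> [k [t [v [k0 t0 tk t_incr g_lerp]]]].
suff : forall i, (i <= k)%N -> {within Icc (t 0%N) (t i), continuous g}.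
  by rewrite I01_Icc -t0 -tk; apply.
elim=> [_|i IH ik].
  have -> : Icc (t 0%N) (t 0%N) = [set t 0%N].
    apply/seteqP; split => x; last by move=> ->; rewrite /Icc /= lexx.
    by move=> /andP[? ?]; apply/eqP; rewrite /= eq_le; apply/andP.
  exact: continuous_subspace1.
rewrite (PL_partition_split t_incr ik).
apply: withinU_continuous; [exact: closed_Icc..|exact: IH (ltnW ik)|].
exact: (@PL_piece_continuous g k t v g_lerp i ik).
Qed.

Lemma PL_on01_image (g : R -> pt) : PL_on01 g -> exists s, g @` I = segment_union s.
Proof.
move=> [k [t [v [k0 t0 tk t_incr g_lerp]]]].
case: k k0 tk t_incr g_lerp => // k _ tk t_incr g_lerp.
suff pieces : forall i, (i < k.+1)%N ->
    g @` Icc (t 0%N) (t i.+1) = segment_union [seq (v j, v j.+1) | j <- iota 0 i.+1].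
  by eexists; rewrite I01_Icc -t0 -tk pieces.
elim=> [_|i IH ik].
  by rewrite (PL_piece_image t_incr g_lerp (ltn0Sn k)) segment_union_seq1.
rewrite (PL_partition_split t_incr ik) image_setU IH ?(ltnW ik) //.
rewrite (PL_piece_image t_incr g_lerp ik).
have -> : iota 0 i.+2 = iota 0 i.+1 ++ [:: i.+1] by rewrite -[i.+2]addn1 iotaD.
by rewrite map_cat segment_union_cat segment_union_seq1.
Qed.

End piecewise_linear.

Section arc.
Variable R : realType.
Local Notation pt := (R * R)%type.
Local Notation I := (@I01 R).
Variable g : R -> pt.
Hypotheses (g_cont : {within I, continuous g}) (g_inj : {in I &, injective g}).

Definition arc_inv (x : pt) : R := xget 0 [set s | I s /\ g s = x].

Lemma arc_invP x : (g @` I) x -> I (arc_inv x) /\ g (arc_inv x) = x.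
Proof. by move=> [s Is gs]; apply: (@xgetPex _ 0 [set s | I s /\ g s = x]); exists s. Qed.

Lemma arc_invK s : I s -> arc_inv (g s) = s.
Proof. by move=> Is; have [Iinv ginv] := arc_invP (imageP g Is); apply: g_inj; rewrite ?inE. Qed.

Lemma closed_arc_piece a b : 0 <= a -> b <= 1 -> closed (g @` Icc a b).
Proof.
move=> a0 b1; apply: compact_closed; first exact: norm_hausdorff.
apply: continuous_compact; last exact: compact_Icc.
exact: continuous_subspaceW (Icc_sub_I01 a0 b1) g_cont.
Qed.

Lemma closed_arc : closed (g @` I).
Proof. by rewrite I01_Icc; apply: closed_arc_piece. Qed.

Lemma arc_meet_downclosed (B : set pt) : connected (g @` I `&` B) -> B (g 0) ->
  forall s r, I s -> B (g s) -> 0 <= r <= s -> B (g r).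
Proof.
move=> AB_conn Bg0 s r /andP[s0 s1] Bgs /andP[r0 rs]; apply: contrapT => Bgr.
have r1 : r <= 1 by lra.
have rs' : r < s by rewrite lt_neqAle rs andbT; apply: contraPneq Bgr => ->.
set A := g @` I `&` B.
(* The parameters in [0, r] and in [r, 1] split [A] into two disjoint closed parts. *)
have A_head : A `&` g @` Icc 0 r = A `&` ~` (g @` Icc r 1).
  apply/seteqP; split => x [Ax].
    move=> [q /andP[q0 qr] gqx]; subst x; split => // -[q' /andP[rq' q'1] gq'].
    have qq' : q' = q by apply: g_inj; rewrite ?inE //; apply/andP; split; lra.
    have qr' : q = r by apply/eqP; rewrite eq_le qr -qq' rq'.
    by apply: Bgr; rewrite -qr'; case: Ax.
  move=> nx; split => //; case: Ax => [[q /andP[q0 q1] gq] _]; exists q => //.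
  apply/andP; split => //; rewrite leNgt; apply/negP => rq; apply: nx.
  by exists q => //; apply/andP; split; lra.
have A_head_eq : A `&` g @` Icc 0 r = A.
  apply: AB_conn.
  - exists (g 0); split; last by exists 0; rewrite // /Icc /= lexx.
    by split => //; exists 0 => //; exact: I01_0.
  - exists (~` (g @` Icc r 1)) => //; rewrite openC; exact: closed_arc_piece.
  - by exists (g @` Icc 0 r) => //; exact: closed_arc_piece.
have : A (g s) by split => //; exists s => //; apply/andP.
rewrite -A_head_eq => -[_ [q /andP[q0 qr] gq]].
have qs : q = s by apply: g_inj; rewrite ?inE //; apply/andP; split; lra.
by move: rs'; rewrite -qs ltNge qr.
Qed.

End arc.

Section deformation.
Variable R : realType.
Local Notation pt := (R * R)%type.
Local Notation I := (@I01 R).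

Definition deformation (Y X : set pt) (D : pt -> R -> pt) : Prop :=
  [/\ {within Y `*` I, continuous (fun p => D p.1 p.2)},
      (forall x u, Y x -> I u -> Y (D x u)),
      (forall x, Y x -> D x 0 = x) & (forall x, Y x -> X (D x 1))].

Definition deformable (Y X : set pt) : Prop := exists D, deformation Y X D.

Lemma deformable_refl (X : set pt) : deformable X X.
Proof.
exists (fun x _ => x); split => //.
by apply: continuous_subspaceT; exact: continuous_fst.
Qed.

Lemma deformable0 (X : set pt) : deformable set0 X.
Proof.
exists (fun x _ => x); split => //.
by rewrite set0X; exact: continuous_subspace0.
Qed.

Lemma deformable_trans (Z Y X : set pt) : closed Z -> Y `<=` Z ->
  deformable Z Y -> deformable Y X -> deformable Z X.
Proof.
move=> cZ YZ [D1 [cD1 D1Z D10 D11]] [D2 [cD2 D2Y D20 D21]].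
exists (fun x u => if u <= 1/2 then D1 x (2 * u) else D2 (D1 x 1) (2 * u - 1)); split.
- apply: (concat_homotopy_continuous (g := fun x v => D2 (D1 x 1) v) cZ cD1).
    apply: (@subspace_continuous_comp _ _ _ _ (Y `*` I) (fun p => (D1 p.1 1, p.2)) _ _ _ cD2).
      apply: (@continuous_pair (subspace (Z `*` I))); last first.
        by apply: continuous_subspaceT; exact: continuous_snd.
      apply: (@subspace_continuous_comp _ _ _ _ (Z `*` I) (fun p => (p.1, 1)) _ _ _ cD1).
        by apply: (@continuous_pair (subspace (Z `*` I))); apply: continuous_subspaceT;
          [exact: continuous_fst|exact: cst_continuous].
      by move=> _ [[x u] [/= Zx _] <-]; split => //; exact: I01_1.
    by move=> _ [[x u] [/= Zx Iu] <-]; split => //; exact: D11.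
  by move=> x Zx; rewrite D20 //; exact: D11.
- move=> x u Zx /andP[u0 u1]; case: ifPn => uh.
    by apply: D1Z => //; apply/andP; split; lra.
  by apply/YZ/D2Y; [exact: D11|apply/andP; split; lra].
- by move=> x Zx; rewrite ifT ?mulr0 ?D10 //; lra.
- move=> x Zx; rewrite ifF; last by apply/negbTE; rewrite -ltNge; lra.
  by rewrite mulr1 (_ : 2 - 1 = 1 :> R); [apply/D21/D11|lra].
Qed.

End deformation.

Section sweep_height.
Variable R : realType.
Local Notation I := (@I01 R).

Definition clamp01 (x : R) : R := Num.min 1 (Num.max 0 x).

Lemma clamp01_continuous : continuous clamp01.
Proof. by rewrite /clamp01; solve_continuous. Qed.

Lemma clamp01_I x : I (clamp01 x).
Proof. by apply/andP; split; rewrite /clamp01 ?le_min ?ge_min ?le_max ?lexx ?ler01. Qed.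

Lemma clamp01_le0 x : x <= 0 -> clamp01 x = 0.
Proof. by move=> x0; rewrite /clamp01 max_l // min_r // ler01. Qed.

Lemma clamp01_ge1 x : 1 <= x -> clamp01 x = 1.
Proof. by move=> x1; rewrite /clamp01 max_r ?min_l //; lra. Qed.

Definition sweep (s : R) : R := clamp01 (3 * s - 1).

Definition height (s : R) : R := clamp01 (Num.min (3 * s) (3 - 3 * s)).

Lemma sweep_continuous : continuous sweep.
Proof. by apply: continuous_comp_fun clamp01_continuous; solve_continuous. Qed.

Lemma height_continuous : continuous height.
Proof. by apply: continuous_comp_fun clamp01_continuous; solve_continuous. Qed.

Lemma sweep_lo s : s <= 1/3 -> sweep s = 0.
Proof. by move=> s13; apply: clamp01_le0; lra. Qed.

Lemma sweep_hi s : 2/3 <= s -> sweep s = 1.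
Proof. by move=> s23; apply: clamp01_ge1; lra. Qed.

Lemma height_mid s : 1/3 <= s <= 2/3 -> height s = 1.
Proof. by move=> /andP[? ?]; apply: clamp01_ge1; rewrite le_min; apply/andP; split; lra. Qed.

Lemma height0 : height 0 = 0.
Proof. by apply: clamp01_le0; rewrite ge_min; apply/orP; left; lra. Qed.

Lemma height1 : height 1 = 0.
Proof. by apply: clamp01_le0; rewrite ge_min; apply/orP; right; lra. Qed.

End sweep_height.

Section contractible.
Variable R : realType.
Local Notation pt := (R * R)%type.
Local Notation I := (@I01 R).

Lemma contractible_path_connected (X : set pt) (z : pt) :
  deformable X [set z] -> path_connected X.
Proof.
move=> [D [cD DX D0 D1]] x y Xx Xy.
pose H (q : R * R) := if q.2 <= 1/2 then D x (2 * q.2) else D y (1 - (2 * q.2 - 1)).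
have cH : {within [set: R] `*` I, continuous H}.
  apply: (concat_homotopy_continuous (f := fun _ v => D x v) (g := fun _ v => D y (1 - v)) closedT).
  - apply: (@subspace_continuous_comp _ _ _ _ (X `*` I) (fun q => (x, q.2)) _ _ _ cD).
      by apply: continuous_subspaceT; apply: continuous_pair; solve_continuous.
    by move=> _ [[s v] [_ Iv] <-].
  - apply: (@subspace_continuous_comp _ _ _ _ (X `*` I) (fun q : R * R => (y, 1 - q.2)) _ _ _ cD).
      by apply: continuous_subspaceT; apply: continuous_pair; solve_continuous.
    by move=> _ [[s v] [_ /= /andP[v0 v1]] <-]; split => //=; apply/andP; split; lra.
  - by move=> _ _; rewrite subr0 (D1 x Xx) (D1 y Xy).
exists (H \o fun t => (0, t)); split.
- apply: (subspace_continuous_comp _ _ cH).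
    by apply: continuous_subspaceT; apply: continuous_pair; solve_continuous.
  by move=> _ [t It <-].
- move=> _ [t /andP[t0 t1] <-]; rewrite /H /=.
  by case: leP => th; apply: DX => //; apply/andP; split; lra.
- by rewrite /H /= ifT ?mulr0 ?D0 //; lra.
- rewrite /H /= ifF; last by apply/negbTE; rewrite -ltNge; lra.
  by rewrite (_ : 1 - (2 * 1 - 1) = 0 :> R) ?D0 //; lra.
Qed.

Section loop_contraction.
Variables (X : set pt) (z : pt) (D : pt -> R -> pt) (p : R -> pt).
Hypotheses (D_cont : {within X `*` I, continuous (fun q => D q.1 q.2)})
  (D_in : forall x u, X x -> I u -> X (D x u))
  (D_0 : forall x, X x -> D x 0 = x) (D_1 : forall x, X x -> D x 1 = z)
  (p_cont : {within I, continuous p}) (p_in : p @` I `<=` X) (p_loop : p 0 = p 1).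

Let pX s : I s -> X (p s). Proof. by move=> Is; apply: p_in; exists s. Qed.

Let Xp0 : X (p 0). Proof. by apply: pX; exact: I01_0. Qed.

(* [loop_lift s 1] runs from [p 0] up to [z] along [D (p 0)], stays at [z] while
   the loop is swept, and comes back down along [D (p 1) = D (p 0)];
   [loop_retract] then contracts this path along [D (p 0)]. *)
Definition loop_param (s v : R) : R := (1 - v) * s + v * sweep s.

Definition loop_lift (s v : R) : pt := D (p (loop_param s v)) (v * height s).

Definition loop_retract (s v : R) : pt := D (p 0) ((1 - v) * height s).

Lemma loop_param_I s v : I s -> I v -> I (loop_param s v).
Proof.
move=> /andP[s0 s1] /andP[v0 v1]; have /andP[w0 w1] := clamp01_I (3 * s - 1).
by apply/andP; rewrite /loop_param /sweep; split; nra.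
Qed.

Lemma height_scale_I s v : I v -> I (v * height s).
Proof.
move=> /andP[v0 v1]; have /andP[h0 h1] := clamp01_I (Num.min (3 * s) (3 - 3 * s)).
by apply/andP; rewrite /height; split; nra.
Qed.

Lemma loop_lift_in s v : I s -> I v -> X (loop_lift s v).
Proof. by move=> Is Iv; apply: D_in; [apply/pX/loop_param_I|exact: height_scale_I]. Qed.

Lemma loop_retract_in s v : I v -> X (loop_retract s v).
Proof.
move=> /andP[v0 v1]; apply: D_in Xp0 _; apply: height_scale_I.
by apply/andP; split; lra.
Qed.

Lemma loop_lift_continuous : {within I `*` I, continuous (fun q => loop_lift q.1 q.2)}.
Proof.
have csweep : continuous (fun q : R * R => sweep q.1).
  by move=> q; apply: continuous_comp; [exact: continuous_fst|exact: sweep_continuous].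
have cheight : continuous (fun q : R * R => height q.1).
  by move=> q; apply: continuous_comp; [exact: continuous_fst|exact: height_continuous].
apply: (@subspace_continuous_comp _ _ _ _ (X `*` I)
  (fun q : R * R => (p (loop_param q.1 q.2), q.2 * height q.1)) _ _ _ D_cont).
  apply: (@continuous_pair (subspace (I `*` I))).
    apply: (@subspace_continuous_comp _ _ _ _ I (fun q : R * R => loop_param q.1 q.2) _ _ _ p_cont).
      by apply: continuous_subspaceT; rewrite /loop_param; solve_continuous.
    by move=> _ [[s v] [/= Is Iv] <-]; exact: loop_param_I.
  by apply: continuous_subspaceT; solve_continuous.
by move=> _ [[s v] [/= Is Iv] <-]; split; [apply/pX/loop_param_I|exact: height_scale_I].
Qed.

Lemma loop_retract_continuous :
  {within I `*` I, continuous (fun q => loop_retract q.1 q.2)}.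
Proof.
apply: (@subspace_continuous_comp _ _ _ _ (X `*` I)
  (fun q : R * R => (p 0, (1 - q.2) * height q.1)) _ _ _ D_cont).
  apply: continuous_subspaceT; apply: continuous_pair; first exact: cst_continuous.
  apply: continuous_mul_fun; first by solve_continuous.
  by move=> q; apply: continuous_comp; [exact: continuous_fst|exact: height_continuous].
move=> _ [[s v] [/= Is /andP[v0 v1]] <-]; split => //; apply: height_scale_I.
by apply/andP; split; lra.
Qed.

Lemma loop_lift_retract s : I s -> loop_lift s 1 = loop_retract s 0.
Proof.
move=> Is; rewrite /loop_lift /loop_retract /loop_param subrr mul0r add0r subr0 !mul1r.
have [s13|s13] := leP s (1/3); first by rewrite sweep_lo.
have [s23|s23] := leP (2/3) s; first by rewrite sweep_hi // p_loop.
rewrite height_mid; last by apply/andP; split; lra.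
by rewrite !D_1 //; apply/pX/clamp01_I.
Qed.

Lemma loop_lift_end s v : sweep s = s -> height s = 0 -> I s -> loop_lift s v = p s.
Proof.
rewrite /loop_lift /loop_param => -> -> Is.
by rewrite mulr0 -mulrDl subrK mul1r D_0 //; exact: pX.
Qed.

Lemma loop_retract_end s v : height s = 0 -> loop_retract s v = p 0.
Proof. by move=> h0; rewrite /loop_retract h0 mulr0 D_0. Qed.

Lemma loop_retract1 s : loop_retract s 1 = p 0.
Proof. by rewrite /loop_retract subrr mul0r D_0. Qed.

Lemma loop_nullhomotopy : exists H : R * R -> pt,
  [/\ {within I `*` I, continuous H}, H @` (I `*` I) `<=` X,
      (forall s, I s -> H (s, 0) = p s), (forall s, I s -> H (s, 1) = p 0) &
      (forall u, I u -> H (0, u) = p 0 /\ H (1, u) = p 0)].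
Proof.
exists (fun q => if q.2 <= 1/2 then loop_lift q.1 (2 * q.2) else loop_retract q.1 (2 * q.2 - 1)).
have sweep0 : @sweep R 0 = 0 by apply: sweep_lo; lra.
have sweep1 : @sweep R 1 = 1 by apply: sweep_hi; lra.
split.
- apply: (concat_homotopy_continuous _ loop_lift_continuous loop_retract_continuous).
    exact: closed_I01.
  exact: loop_lift_retract.
- move=> _ [[s u] [/= Is /andP[u0 u1]] <-] /=.
  case: leP => uh; [apply: loop_lift_in|apply: loop_retract_in] => //;
    by apply/andP; split; lra.
- move=> s Is /=; rewrite ifT ?mulr0; last lra.
  by rewrite /loop_lift /loop_param subr0 mul1r !mul0r addr0 D_0 //; exact: pX.
- move=> s Is /=; rewrite ifF; last by apply/negbTE; rewrite -ltNge; lra.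
  by rewrite (_ : 2 * 1 - 1 = 1 :> R) ?loop_retract1 //; lra.
- move=> u Iu /=; case: ifP => _; split.
  + by apply: loop_lift_end; [exact: sweep0|exact: height0|exact: I01_0].
  + by rewrite p_loop; apply: loop_lift_end; [exact: sweep1|exact: height1|exact: I01_1].
  + by apply: loop_retract_end; exact: height0.
  + by apply: loop_retract_end; exact: height1.
Qed.

End loop_contraction.

Lemma contractible_loops_nullhomotopic (X : set pt) (z : pt) :
  deformable X [set z] -> loops_nullhomotopic X.
Proof. by move=> [D [cD DX D0 D1]] p cp pX p01; exact: loop_nullhomotopy cD DX D0 D1 cp pX p01. Qed.

End contractible.

Section attach_arc.
Variable R : realType.
Local Notation pt := (R * R)%type.
Local Notation I := (@I01 R).

Lemma arc_homotopy_continuous (g : R -> pt) (F : pt -> R -> pt) (phi : R * R -> R) :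
  {within I, continuous g} -> continuous phi -> (forall q, (I `*` I) q -> I (phi q)) ->
  (forall s u, I s -> I u -> F (g s) u = g (phi (s, u))) ->
  {within g @` I `*` I, continuous (fun q => F q.1 q.2)}.
Proof.
move=> cg cphi phiI Fg.
pose G (q : R * R) := (g q.1, q.2).
have -> : g @` I `*` I = G @` (I `*` I).
  apply/seteqP; split; first by move=> [x u] [/= [s Is <-] Iu]; exists (s, u).
  by move=> _ [[s u] [/= Is Iu] <-]; split => //=; exists s.
apply: (factor_continuous_compact (g := g \o phi)).
- exact: norm_hausdorff.
- by apply: compact_setX; exact: compact_I01.
- apply: (@continuous_pair (subspace (I `*` I))); last first.
    by apply: continuous_subspaceT; exact: continuous_snd.
  apply: (subspace_continuous_comp _ _ cg).
    by apply: continuous_subspaceT; exact: continuous_fst.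
  by move=> _ [q [Iq _] <-].
- apply: (subspace_continuous_comp _ _ cg); first exact: continuous_subspaceT.
  by move=> _ [q /phiI Iq <-].
- by move=> [s u] [/= Is Iu]; rewrite /G /= Fg.
Qed.

Variables (X : set pt) (g : R -> pt) (a : R).
Hypotheses (X_closed : closed X) (g_cont : {within I, continuous g})
  (g_inj : {in I &, injective g}) (Ia : I a)
  (X_arc : forall s, I s -> X (g s) <-> s <= a).

Definition arc_retraction (x : pt) (u : R) : pt :=
  if pselect (X x) then x else g (a + (1 - u) * (arc_inv g x - a)).

Let phi (q : R * R) : R := Num.min q.1 (a + (1 - q.2) * (q.1 - a)).

Let phi_I q : (I `*` I) q -> I (phi q).
Proof.
case: q => s u [/= /andP[s0 s1] /andP[u0 u1]]; case/andP: Ia => a0 a1; rewrite /phi /=.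
by have [sa|sa] := leP s a; [rewrite min_l|rewrite min_r]; try (apply/andP; split); nra.
Qed.

Let arc_retractionE s u : I s -> I u -> arc_retraction (g s) u = g (phi (s, u)).
Proof.
move=> Is /andP[u0 u1]; rewrite /arc_retraction /phi /=; case: pselect => Xgs.
  by have sa := (X_arc Is).1 Xgs; rewrite min_l //; nra.
have sa : a < s by rewrite ltNge; apply: contra_notN Xgs => /(X_arc Is).
by rewrite arc_invK // min_r //; nra.
Qed.

Lemma arc_retraction_in x u : (X `|` g @` I) x -> I u ->
  (X `|` g @` I) (arc_retraction x u) /\ X (arc_retraction x 1).
Proof.
move=> Yx /andP[u0 u1]; rewrite /arc_retraction; case: pselect => [Xx|nXx].
  by split; [left|].
case: Yx => [//|[s Is gs]]; subst x; rewrite arc_invK //.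
have sa : a < s by rewrite ltNge; apply: contra_notN nXx => /(X_arc Is).
split; last by rewrite subrr mul0r addr0; apply/X_arc.
right; exists (a + (1 - u) * (s - a)) => //.
by case/andP: Is => s0 s1; case/andP: Ia => a0 a1; apply/andP; split; nra.
Qed.

Lemma deformable_attach_arc : deformable (X `|` g @` I) X.
Proof.
exists arc_retraction; split.
- have -> : (X `|` g @` I) `*` I = X `*` I `|` g @` I `*` I.
    apply/seteqP; split => -[x u] /=; first by move=> [[Xx|Ax] Iu]; [left|right].
    by move=> [] [Yx Iu]; split => //; [left|right].
  apply: withinU_continuous.
  + by apply: closed_setX => //; exact: closed_I01.
  + by apply: closed_setX; [exact: closed_arc|exact: closed_I01].
  + apply: (@subspace_eq_continuous _ _ _ fst); last first.
      by apply: continuous_subspaceT; exact: continuous_fst.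
    move=> [x u]; rewrite inE => -[/= Xx _].
    by rewrite /from_subspace /arc_retraction /=; case: pselect.
  + apply: (arc_homotopy_continuous g_cont _ phi_I arc_retractionE).
    by rewrite /phi; solve_continuous.
- by move=> x u Yx Iu; case: (arc_retraction_in Yx Iu).
- move=> x [Xx|[s Is <-]]; rewrite /arc_retraction; case: pselect => //.
  by rewrite arc_invK // subr0 mul1r addrC subrK.
- by move=> x Yx; case: (arc_retraction_in Yx I01_1).
Qed.

End attach_arc.

Section arc_union.
Variable R : realType.
Local Notation pt := (R * R)%type.
Local Notation I := (@I01 R).
Variables (z : pt) (T : finType) (alpha : T -> set pt) (g : T -> R -> pt).
Hypotheses (g_cont : forall i, {within I, continuous g i})
  (g_inj : forall i, {in I &, injective (g i)})
  (alphaE : forall i, alpha i = g i @` I) (g0 : forall i, g i 0 = z)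
  (alpha_conn : forall i j, connected (alpha i `&` alpha j)).

Definition arcs_union (s : seq T) : set pt :=
  [set z] `|` \bigcup_(i in [set i | i \in s]) alpha i.

Lemma arcs_union_nil : arcs_union [::] = [set z].
Proof. by apply/seteqP; split => x; [case=> // -[]|left]. Qed.

Lemma arcs_union_cons i s : arcs_union (i :: s) = arcs_union s `|` alpha i.
Proof.
apply/seteqP; split => x.
  move=> [->|[j /=]]; first by left; left.
  by rewrite inE => /orP[/eqP -> ?|js ?]; [right|left; right; exists j].
move=> [[->|[j /= js ?]]|?]; [by left|right; exists j => //=|right; exists i => //=].
  by rewrite inE js orbT.
by rewrite inE eqxx.
Qed.

Lemma alpha_z i : alpha i z.
Proof. by rewrite alphaE -(g0 i); exists 0 => //; exact: I01_0. Qed.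

Lemma closed_arcs_union s : closed (arcs_union s).
Proof.
elim: s => [|i s IH]; last first.
  by rewrite arcs_union_cons; apply: closedU IH _; rewrite alphaE; exact: closed_arc.
rewrite arcs_union_nil.
by apply: compact_closed; [exact: norm_hausdorff|exact: compact_set1].
Qed.

(* The interval is initial because each [alpha i `&` alpha j] is connected and
   contains [z], and closed because [arcs_union s] is. *)
Lemma arcs_union_initial i s :
  exists2 a, I a & forall t, I t -> arcs_union s (g i t) <-> t <= a.
Proof.
have down : forall t r : R, I t -> arcs_union s (g i t) -> 0 <= r <= t -> arcs_union s (g i r).
  move=> t r It [/= gz|[j /= js Ajg]] /andP[r0 rt].
    have t0 : t = 0 by apply: (@g_inj i); rewrite ?inE ?g0 ?gz //; exact: I01_0.
    have -> : r = 0 by apply/eqP; rewrite eq_le r0 andbT -t0.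
    by left; rewrite /= g0.
  right; exists j => //; apply: (arc_meet_downclosed (@g_cont i) (@g_inj i) _ _ It) => //.
  - by rewrite -alphaE; exact: alpha_conn.
  - by rewrite g0; exact: alpha_z.
  - by apply/andP.
have [a Ia S_Icc] : exists2 a, I a & [set t | I t /\ arcs_union s (g i t)] = Icc 0 a.
  apply: closed_downset_Icc.
  - rewrite (_ : [set t | _] = I `&` g i @^-1` arcs_union s) //.
    apply: (closed_preimage_within _ (@g_cont i) (@closed_arcs_union s)).
    exact: closed_I01.
  - by split; [exact: I01_0|left; rewrite g0].
  - by move=> t [].
  - move=> t r [It Yt] /andP[r0 rt]; split; last by apply: (down t) => //; apply/andP.
    by case/andP: It => _ t1; apply/andP; split; lra.
exists a => // t It; split => [Yt|ta].
  by have /andP[] : Icc 0 a t by rewrite -S_Icc.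
have : [set t | I t /\ arcs_union s (g i t)] t by rewrite S_Icc; case/andP: It => t0 _; apply/andP.
by case.
Qed.

Lemma deformable_arcs_union s : deformable (arcs_union s) [set z].
Proof.
elim: s => [|i s IH]; first by rewrite arcs_union_nil; exact: deformable_refl.
rewrite arcs_union_cons; apply: deformable_trans IH.
- by apply: closedU; [exact: closed_arcs_union|rewrite alphaE; exact: closed_arc].
- exact: subsetUl.
- have [a Ia Ya] := arcs_union_initial i s.
  by rewrite alphaE; apply: deformable_attach_arc Ia Ya => //; exact: closed_arcs_union.
Qed.

Lemma deformable_bigcup_arcs : deformable (\bigcup_(i in [set: T]) alpha i) [set z].
Proof.
have [[i _]|noT] := pselect (exists i : T, True).
  suff -> : \bigcup_(i in [set: T]) alpha i = arcs_union (enum T).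
    exact: deformable_arcs_union.
  apply/seteqP; split => x; first by move=> [j _ ?]; right; exists j; rewrite //= mem_enum.
  by move=> [->|[j _ ?]]; [exists i => //; exact: alpha_z|exists j].
suff -> : \bigcup_(i in [set: T]) alpha i = set0 by exact: deformable0.
by apply/seteqP; split => x // [i]; case: noT; exists i.
Qed.

End arc_union.

Theorem mainTheorem8 (R : realType) (n : nat) (alpha : 'I_n -> set (R * R))
    (z : R * R) :
  (forall i, exists y, PL_arc (alpha i) z y) ->
  (forall i j, connected (alpha i `&` alpha j)) ->
  tree (\bigcup_(i in [set: 'I_n]) alpha i).
Proof.
move=> alpha_arc alpha_conn.
have arc_param i : exists gi : R -> R * R,
    [/\ PL_on01 gi, {in @I01 R &, injective gi}, alpha i = gi @` @I01 R & gi 0 = z].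
  by have [y [gi [? ? ? ? _]]] := alpha_arc i; exists gi.
have [g g_arc] := choice arc_param.
have g_cont i : {within @I01 R, continuous g i} by case: (g_arc i) => /PL_on01_continuous.
have contractible : deformable (\bigcup_(i in [set: 'I_n]) alpha i) [set z].
  by apply: (deformable_bigcup_arcs g_cont) => // i; case: (g_arc i).
split.
- apply: bigcup_connected => [|i _].
    by exists z => i _; case: (g_arc i) => _ _ -> <-; exists 0 => //; exact: I01_0.
  case: (g_arc i) => _ _ -> _; apply: connected_continuous_connected (g_cont i).
  by rewrite I01_Icc; exact: connected_Icc.
- split; first exact: contractible_path_connected contractible.
  exact: contractible_loops_nullhomotopic contractible.
- have segments i : exists s, alpha i = segment_union s.
    by case: (g_arc i) => /PL_on01_image[s gs] _ -> _; exists s.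
  have [ss ssE] := choice segments.
  rewrite (eq_bigcupr (fun i _ => ssE i)) bigcup_segment_union.
  exact: segment_union_finite.
Qed.
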